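(* Let $X$ be a finite set, $f:2^X\to\mathbb{R}_{\ge0}$ a normalized monotone submodular function, $n\ge 2$ an integer with $n\le|X|$, and $S^*\in\arg\max_{S\subseteq X,\,|S|\le n}f(S)$. Let $S=S_n=\{x_1,\dots,x_n\}$ be produced by the optimistic algorithm ($S_0=\emptyset$, $x_i\in\arg\max_{x\in X\setminus S_{i-1}}\bar f(x\mid S_{i-1})$, $S_i=S_{i-1}\cup\{x_i\}$), and assume $\bar f(x_i\mid S_{i-1})>0$ for $3\le i\le n$. Then \[ f(S)\ \ge\ \left(1-e^{-\frac{1}{n}\left(2+\sum_{i=3}^n \frac{f(x_i\mid S_{i-1})}{\bar f(x_i\mid S_{i-1})}\right)}\right) f(S^* ). \] Equivalently, in terms of the 2-marginal curvature $c_2(x\mid S)=1-f(x\mid S)/\bar f(x\mid S)$, \[ f(S)\ \ge\ \left(1-e^{-\frac{1}{n}\left(2+\sum_{i=3}^n (1-c_2(x_i\mid S_{i-1}))\right)}\right) f(S^* ). \]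
   Context: $f(x\mid A):=f(A\cup\{x\})-f(A)$, $f(x):=f(\{x\})$, $f(x\mid y):=f(x\mid\{y\})$. Pairwise upper estimate: $\bar f(x\mid S):=\min_{A\subseteq S,\,|A|\le1} f(x\mid A)$ (so $\bar f(x\mid\emptyset)=f(x)$ and $\bar f(x\mid S)=\min_{y\in S}f(x\mid y)$ for $S\neq\emptyset$). The $k$-marginal curvature of $f$ at $x\in X\setminus S$ given $S$ is $c_k(x\mid S)=1-\max_{A\subseteq S,|A|<k} f(x\mid S)/f(x\mid A)$; for $k=2$ this equals $1-f(x\mid S)/\bar f(x\mid S)$. *)

From HB Require Import structures.
From mathcomp Require Import all_boot all_order all_algebra.
From mathcomp Require Import all_classical all_reals all_analysis.
Set Implicit Arguments. Unset Strict Implicit. Unset Printing Implicit Defensive.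
Import Order.TTheory GRing.Theory Num.Theory.
Local Open Scope ring_scope.

Section Defs.
Variables (R : realType) (X : finType).
Implicit Types (f : {set X} -> R) (A B S : {set X}) (x : X).

Definition marg f x A : R := f (x |: A) - f A.

Definition fbar f x S : R :=
  \big[Order.min/marg f x (@finset.set0 X)]_(A in powerset S | (#|A| <= 1)%N) marg f x A.

Definition sf_normalized f := f (@finset.set0 X) = 0.
Definition sf_nonneg f := forall A, 0 <= f A.
Definition sf_monotone f := forall A B, A \subset B -> f A <= f B.
Definition sf_submodular f := forall A B, f (A :|: B) + f (A :&: B) <= f A + f B.

(* S_i = {x_1,...,x_i} (0-indexed: elements xs j with j < i) *)
Definition prefix_set (n : nat) (xs : 'I_n -> X) (i : nat) : {set X} :=
  [set xs j | j : 'I_n & (j < i)%N].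

Definition optimistic_run f (n : nat) (xs : 'I_n -> X) : Prop :=
  forall i : 'I_n,
    xs i \notin prefix_set xs i /\
    (forall x, x \notin prefix_set xs i -> fbar f x (prefix_set xs i) <= fbar f (xs i) (prefix_set xs i)).

Definition is_opt f (n : nat) (Sstar : {set X}) : Prop :=
  (#|Sstar| <= n)%N /\ forall S, (#|S| <= n)%N -> f S <= f Sstar.
End Defs.

From HB Require Import structures.
From mathcomp Require Import all_boot all_order all_algebra.
From mathcomp Require Import all_classical all_reals all_analysis.
From mathcomp Require Import lra.
Import Order.TTheory GRing.Theory Num.Theory.
Local Open Scope ring_scope.
Set Implicit Arguments. Unset Strict Implicit.

(* Let [T] be an optimal set of size at most [n] and [g_i := f(T) - f(S_i)] the
   gap after [i] optimistic steps.  Every [y] in [T] either lies in [S_i] or has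
   [f(y | S_i) <= fbar(y | S_i) <= fbar(x_{i+1} | S_i)], so submodularity gives
   [g_i <= n fbar(x_{i+1} | S_i)].  With [r_i := f(x_{i+1} | S_i) / fbar(x_{i+1} | S_i)]
   (which is [1] for the first two steps, where [|S_i| <= 1] and [fbar] is exact)
   this yields [g_{i+1} <= (1 - r_i / n) g_i <= exp(-r_i / n) g_i], and the bound
   follows by multiplying out. *)

Section PrefixSet.
Variables (X : finType) (n : nat) (xs : 'I_n -> X).

Lemma prefix_setS (i : 'I_n) : prefix_set xs i.+1 = xs i |: prefix_set xs i.
Proof.
apply/finset.setP => z; rewrite finset.in_setU1; apply/imsetP/idP.
- move=> [j]; rewrite finset.inE ltnS leq_eqVlt => /orP[/eqP/val_inj -> | ji] ->.
    by rewrite eqxx.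
  by apply/orP; right; apply/imsetP; exists j; rewrite ?finset.inE.
- case/orP => [/eqP ->|/imsetP[j]]; first by exists i; rewrite ?finset.inE.
  by rewrite finset.inE => ji ->; exists j; rewrite // finset.inE ltnW.
Qed.

Lemma card_prefix_set_le1 k : (k <= 1)%N -> (#|prefix_set xs k| <= 1)%N.
Proof.
move=> k1; apply/card_le1_eqP => _ _ /imsetP[j + ->] /imsetP[j' + ->].
rewrite !finset.inE => jk j'k; congr xs; apply: val_inj.
by move: jk j'k; case: k k1 => [|[|]] //=; rewrite !ltnS !leqn0 => _ /eqP-> /eqP->.
Qed.
End PrefixSet.

Section Marginals.
Variables (R : realType) (X : finType) (f : {set X} -> R).
Hypotheses (f_mono : sf_monotone f) (f_submod : sf_submodular f).
Implicit Types (x y : X) (A B S T : {set X}).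

Lemma marg_ge0 x A : 0 <= marg f x A.
Proof. by rewrite /marg subr_ge0 f_mono // finset.subsetUr. Qed.

Lemma marg_antimono x A B : A \subset B -> marg f x B <= marg f x A.
Proof.
move=> AB; rewrite /marg.
have := f_submod (x |: A) B.
rewrite -finset.setUA (finset.setUidPr AB).
have : f A <= f ((x |: A) :&: B).
  by apply: f_mono; rewrite finset.subsetI AB finset.subsetUr.
lra.
Qed.

Lemma marg_le_fbar x S : marg f x S <= fbar f x S.
Proof.
rewrite /fbar; apply: (big_ind (fun v => marg f x S <= v)).
- exact/marg_antimono/finset.sub0set.
- by move=> a b ha hb; rewrite le_min ha hb.
- by move=> A /andP[]; rewrite finset.powersetE => AS _; apply: marg_antimono.
Qed.

Lemma fbar_ge0 x S : 0 <= fbar f x S.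
Proof. exact: le_trans (marg_ge0 x S) (marg_le_fbar x S). Qed.

Lemma fbar_le_marg x S A : A \subset S -> (#|A| <= 1)%N -> fbar f x S <= marg f x A.
Proof.
move=> AS A1; rewrite /fbar (bigD1 A) /=; last by rewrite finset.powersetE AS.
by rewrite ge_min lexx.
Qed.

Lemma fbar_small x S : (#|S| <= 1)%N -> fbar f x S = marg f x S.
Proof.
by move=> S1; apply/eqP; rewrite eq_le fbar_le_marg // marg_le_fbar.
Qed.

Lemma setU_sub_le_sum_marg S T : f (S :|: T) - f S <= \sum_(y in T) marg f y S.
Proof.
suff sub_seq s : f (S :|: [set y in s]) - f S <= \sum_(y <- s) marg f y S.
  have := sub_seq (enum T); rewrite big_enum.
  by have -> : [set y in enum T] = T by apply/finset.setP => y; rewrite finset.inE mem_enum.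
elim: s => [|y s IHs].
  by rewrite big_nil (_ : [set y in [::]] = finset.set0) ?finset.setU0 ?subrr //;
     apply/finset.setP => z; rewrite finset.inE.
have -> : S :|: [set z in y :: s] = y |: (S :|: [set z in s]).
  by apply/finset.setP => z; rewrite !finset.inE; case: (z == y); rewrite ?orbT.
have := marg_antimono y (finset.subsetUl S [set z in s]).
by rewrite big_cons /marg; lra.
Qed.

Lemma gap_le_card_fbar S T x :
  (forall y, y \notin S -> fbar f y S <= fbar f x S) ->
  f T - f S <= #|T|%:R * fbar f x S.
Proof.
move=> x_max.
have T_le : f T <= f (S :|: T) by rewrite f_mono // finset.subsetUr.
have margT : \sum_(y in T) marg f y S <= \sum_(y in T) fbar f x S.
  apply: ler_sum => y _; have [yS | yNS] := boolP (y \in S).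
    by rewrite /marg (finset.setUidPr _) ?finset.sub1set // subrr fbar_ge0.
  exact: le_trans (marg_le_fbar y S) (x_max y yNS).
have := setU_sub_le_sum_marg S T.
by rewrite sumr_const -mulr_natl in margT; lra.
Qed.
End Marginals.

Lemma one_sub_mul_le_expR (R : realType) (x g e : R) :
  0 <= x <= 1 -> g <= e -> 0 <= e -> (1 - x) * g <= expR (- x) * e.
Proof.
move=> /andP[x0 x1] ge e0.
apply: le_trans (ler_wpM2l _ ge) (ler_wpM2r e0 _); first by rewrite subr_ge0.
by have := expR_ge1Dx (- x); lra.
Qed.

(* [a k], [c] and [b i] play the roles of [f(S_k)], [f(T)] and [fbar(x_{i+1} | S_i)]. *)
Lemma gap_le_expR_sum (R : realType) (n : nat) (a : nat -> R) (b r : 'I_n -> R) (c : R) :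
  (0 < n)%N -> 0 <= c -> 0 <= a 0%N ->
  (forall i : 'I_n, c - a i <= n%:R * b i) ->
  (forall i : 'I_n, 0 <= r i <= 1) ->
  (forall i : 'I_n, r i * b i <= a i.+1 - a i) ->
  forall k, (k <= n)%N ->
  c - a k <= expR (- (n%:R^-1 * \sum_(i < n | (i < k)%N) r i)) * c.
Proof.
move=> n_gt0 c_ge0 a0_ge0 gap_le r01 r_step.
set t : R := n%:R^-1.
have t_gt0 : 0 < t by rewrite invr_gt0 ltr0n.
have tn : t * n%:R = 1 by rewrite mulVf // pnatr_eq0 -lt0n.
have t_le1 : t <= 1 by rewrite invf_le1 ?ler1n ?ltr0n.
elim=> [_ | k IHk lt_kn].
  by rewrite big_pred0 // mulr0 oppr0 expR0 mul1r; lra.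
pose i := Ordinal lt_kn.
have sumS : \sum_(j < n | (j < k.+1)%N) r j = r i + \sum_(j < n | (j < k)%N) r j.
  rewrite (bigD1 i) //=; congr (_ + _); apply: eq_bigl => j.
  by rewrite ltnS leq_eqVlt -val_eqE /=; case: eqP => [->|]; rewrite ?ltnn ?andbT.
have [r_ge0 r_le1] := andP (r01 i).
have tr01 : 0 <= t * r i <= 1.
  rewrite mulr_ge0 ?(ltW t_gt0) //=.
  by have := ler_pM (ltW t_gt0) r_ge0 t_le1 r_le1; rewrite mul1r.
have contract : c - a k.+1 <= (1 - t * r i) * (c - a k).
  have tgap : t * (c - a k) <= b i.
    by have := ler_wpM2l (ltW t_gt0) (gap_le i); rewrite mulrA tn mul1r.
  have := ler_wpM2l r_ge0 tgap; have := r_step i; rewrite /=; lra.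
rewrite sumS mulrDr opprD expRD -mulrA.
apply: le_trans contract (one_sub_mul_le_expR tr01 (IHk (ltnW lt_kn)) _).
by rewrite mulr_ge0 ?expR_ge0.
Qed.

Lemma sum_ite_lt2 (R : realType) (n : nat) (F : 'I_n -> R) : (2 <= n)%N ->
  \sum_(i < n) (if (2 <= i)%N then F i else 1) = 2 + \sum_(i < n | (2 <= i)%N) F i.
Proof.
move=> n2; rewrite (bigID (fun i : 'I_n => (2 <= i)%N)) /= [RHS]addrC; congr (_ + _).
  by apply: eq_bigr => i ->.
rewrite (eq_bigr (fun _ => 1)) => [|i /negbTE-> //].
rewrite (eq_bigl (fun i : 'I_n => (i < 2)%N)) => [|i]; last by rewrite -ltnNge.
by rewrite -(big_ord_widen n (fun=> 1)) // big_ord_recr big_ord1.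
Qed.

Theorem corollary1 (R : realType) (X : finType) (f : {set X} -> R) (n : nat)
  (Sstar : {set X}) (xs : 'I_n -> X) :
  sf_nonneg f -> sf_normalized f -> sf_monotone f -> sf_submodular f ->
  (2 <= n)%N -> (n <= #|X|)%N ->
  is_opt f n Sstar ->
  optimistic_run f xs ->
  (forall i : 'I_n, (2 <= i)%N -> 0 < fbar f (xs i) (prefix_set xs i)) ->
  f (prefix_set xs n) >=
    (1 - expR (- (n%:R^-1 * (2 + \sum_(i < n | (2 <= i)%N)
        marg f (xs i) (prefix_set xs i) / fbar f (xs i) (prefix_set xs i))))) * f Sstar.
Proof.
move=> f_ge0 _ f_mono f_submod n2 _ [Sstar_card _] run fbar_gt0.
have fbar_ge0 := fbar_ge0 f_mono f_submod.
set S := prefix_set xs.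
pose r (i : 'I_n) := if (2 <= i)%N then marg f (xs i) (S i) / fbar f (xs i) (S i) else 1.
have r_marg i : r i * fbar f (xs i) (S i) = marg f (xs i) (S i).
  rewrite /r; case: ifP => [i2 | /negbT]; first by rewrite mulfVK ?gt_eqF ?fbar_gt0.
  by rewrite -ltnNge mul1r => i2; rewrite (fbar_small f_mono f_submod) // card_prefix_set_le1.
have r01 i : 0 <= r i <= 1.
  rewrite /r; case: ifP => [i2 | _]; last by rewrite ler01 lexx.
  rewrite divr_ge0 ?(marg_ge0 f_mono) ?fbar_ge0 //=.
  by rewrite ler_pdivrMr ?fbar_gt0 // mul1r (marg_le_fbar f_mono f_submod).
have gap_le (i : 'I_n) : f Sstar - f (S i) <= n%:R * fbar f (xs i) (S i).
  apply: le_trans (gap_le_card_fbar f_mono f_submod _ (run i).2) _.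
  by rewrite ler_wpM2r ?fbar_ge0 // ler_nat.
have r_step (i : 'I_n) : r i * fbar f (xs i) (S i) <= f (S i.+1) - f (S i).
  by rewrite r_marg /S prefix_setS.
have := gap_le_expR_sum (a := fun k => f (S k)) (ltnW n2) (f_ge0 _) (f_ge0 _)
  gap_le r01 r_step (leqnn n).
rewrite (eq_bigl _ _ (@ltn_ord n)) /r sum_ite_lt2 //; lra.
Qed.
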